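(* Let $E$ be a holomorphic rank-$3$ vector bundle on $\mathbb P_2^*$ which is a sufficiently small deformation of $E_0=\mathrm{End}_0T_{\mathbb P_2^*}$, as in the context. Then the map $f:\mathbb P(E)\to\mathbb P(H^0(\mathbb P(E),H(1))^* )$ given by the linear system of $H(1)$ has image contained in the intersection of the cubic determinantal hypersurface $\{\det X=0\}\subset\mathbb P(\mathrm{Hom}(H^0(\mathbb P_2^*,\Omega^1(2)),\mathbb C^3))$ with the linear subspace $\mathbb P(H^0(\mathbb P(E),H(1))^* )$.
   Context: $\mathbb P(E)$ is the projective bundle of lines in $E$, $H$ the dual of its tautological line bundle, $\mathcal O(1)$ the hyperplane bundle of $\mathbb P_2^*$, so $H^0(\mathbb P(E),H(1))\cong H^0(\mathbb P_2^*,E^*(1))$, of dimension $6$ for $E$ close to $E_0$. For such $E$, $E^*$ is the cokernel of an injective bundle map $\mathbb C^3\otimes\mathcal O(-1)\to\mathbb C^3\otimes\Omega^1(1)$ (the Beilinson monad, with $\mathbb C^3=H^1(E^*(-2))$ and $H^1(E^*(-1))$, each $3$-dimensional), given by a $3\times3$ matrix with entries in $H^0(\mathbb P_2^*,\Omega^1(2))$ (a $3$-dimensional space with basis $x_2dx_3-x_3dx_2$, etc.). Twisting by $\mathcal O(1)$ gives a surjection $\mathbb C^3\otimes H^0(\Omega^1(2))\to H^0(E^*(1))$, whose dual embeds $\mathbb P(H^0(E^*(1))^* )\cong\mathbb P^5$ linearly into the $8$-dimensional projective space of $3\times3$ matrices $X$, identified with $\mathbb P(\mathrm{Hom}(H^0(\Omega^1(2)),\mathbb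 C^3))$; the determinantal hypersurface consists of the singular homomorphisms. *)

(* Concrete coordinate model of the Beilinson-monad
   description of E^* on P_2^* and of the map f : P(E) -> P(H^0(H(1))^* ). *)
From HB Require Import structures.
From mathcomp Require Import all_boot all_order all_algebra.
Set Implicit Arguments. Unset Strict Implicit. Unset Printing Implicit Defensive.
Import Order.TTheory GRing.Theory Num.Theory.
Local Open Scope ring_scope.

Section Model.
Variable C : numClosedFieldType.

Definition isucc (k : 'I_3) : 'I_3 := inord ((k + 1) %% 3)%N.
Definition isucc2 (k : 'I_3) : 'I_3 := inord ((k + 2) %% 3)%N.

(* A point of P_2^* is a nonzero x : 'rV_3 (homogeneous coordinates).
   The fibre of Omega^1(2) at x is identified, via the Euler sequence, with
   the covectors w (coefficients of dx_0,dx_1,dx_2) with sum_j w_j x_j = 0.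
   omega k x = value at x of the k-th basis section of H^0(Omega^1(2)):
     omega 0 = x_1 dx_2 - x_2 dx_1, omega 1 = x_2 dx_0 - x_0 dx_2,
     omega 2 = x_0 dx_1 - x_1 dx_0   (0-based version of x_2dx_3-x_3dx_2, ...). *)
Definition omega (k : 'I_3) (x : 'rV[C]_3) : 'rV[C]_3 :=
  \row_j (if j == isucc k then - x 0 (isucc2 k)
          else if j == isucc2 k then x 0 (isucc k) else 0).

(* Fibre of Omega^1(2) at x, tensored with C^3: 3x3 matrices T whose rows
   are covectors annihilating x (row i = the C^3-component e_i). *)
Definition in_fibre (x : 'rV[C]_3) (T : 'M[C]_3) : Prop := T *m x^T = 0.

(* Monad matrix: entry (i,j) = sum_k (A k) i j * omega_k, an element of
   H^0(Omega^1(2)).  Its value at x applied to u in C^3 (fibre of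
   C^3 (x) O(-1), twisted) is the element of C^3 (x) Omega^1(2)_x : *)
Definition monad_fibre (A : 'I_3 -> 'M[C]_3) (x u : 'rV[C]_3) : 'M[C]_3 :=
  \matrix_(i, c) \sum_(j < 3) \sum_(k < 3) A k i j * u 0 j * omega k x 0 c.

Definition monad_injective (A : 'I_3 -> 'M[C]_3) : Prop :=
  forall x u : 'rV[C]_3, x != 0 -> monad_fibre A x u = 0 -> u = 0.

Definition pairing (V T : 'M[C]_3) : C := \sum_(i < 3) \sum_(c < 3) V i c * T i c.

(* A point of P(E) over x: (a representative of) a nonzero functional on
   E^*(1)_x = coker (monad_fibre A x), i.e. a functional V on
   C^3 (x) Omega^1(2)_x that is nonzero there and kills the image. *)
Definition PE_point (A : 'I_3 -> 'M[C]_3) (x : 'rV[C]_3) (V : 'M[C]_3) : Prop :=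
  [/\ x != 0,
      exists T, in_fibre x T /\ pairing V T != 0
    & forall u, pairing V (monad_fibre A x u) = 0].

(* Image of that point under f, viewed through the dual of the surjection
   C^3 (x) H^0(Omega^1(2)) -> H^0(E^*(1)) as a 3x3 matrix X
   (X i k = value of the functional on e_i (x) omega_k). *)
Definition fmap (x : 'rV[C]_3) (V : 'M[C]_3) : 'M[C]_3 :=
  \matrix_(i, k) \sum_(c < 3) V i c * omega k x 0 c.

(* The linear subspace P(H^0(E^*(1))^* ) inside P(3x3 matrices): the
   annihilator of the image of H^0(C^3 (x) O) = C^3 under the monad. *)
Definition in_linear_subspace (A : 'I_3 -> 'M[C]_3) (X : 'M[C]_3) : Prop :=
  forall u : 'rV[C]_3,
    \sum_(i < 3) \sum_(k < 3) X i k * (\sum_(j < 3) A k i j * u 0 j) = 0.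

End Model.

(* The section omega_k of Omega^1(2) takes at x the value e_k \times x, so
   fmap x V = V W where W is the matrix of v |-> x \times v.  Since x W = 0
   and x <> 0, det W = 0 and hence det (fmap x V) = 0.  If V W = 0, every row
   v of V satisfies x \times v = 0; for a row t of a fibre tensor (x . t = 0)
   the triple product (x \times v) \times t = (x . t) v - (v . t) x then forces
   v . t = 0, so V would vanish on the whole fibre.  The linear condition is a
   reordering of the sums defining the pairing. *)

From HB Require Import structures.
From mathcomp Require Import all_boot all_order all_algebra.
From mathcomp Require Import ring.
Import Order.TTheory GRing.Theory Num.Theory.
Set Implicit Arguments. Unset Strict Implicit. Unset Printing Implicit Defensive.
Local Open Scope ring_scope.

Lemma ord3P (k : 'I_3) : [\/ k = inord 0, k = inord 1 | k = inord 2].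
Proof.
by case: k => [[|[|[|k]]] hk] //; [constructor 1|constructor 2|constructor 3];
  apply/val_inj; rewrite /= inordK.
Qed.

Lemma isucc_inord :
  [/\ isucc (inord 0) = inord 1, isucc (inord 1) = inord 2 & isucc (inord 2) = inord 0].
Proof. by rewrite /isucc !inordK. Qed.

Lemma isucc2_inord :
  [/\ isucc2 (inord 0) = inord 2, isucc2 (inord 1) = inord 0 & isucc2 (inord 2) = inord 1].
Proof. by rewrite /isucc2 !inordK. Qed.

Lemma isucc_neq_isucc2 (k : 'I_3) : isucc2 k != isucc k.
Proof.
have [e1 e2 e3] := isucc_inord; have [f1 f2 f3] := isucc2_inord.
by case: (ord3P k) => ->; rewrite ?(e1, e2, e3, f1, f2, f3) -val_eqE /= !inordK.
Qed.

Lemma sum3 (R : nmodType) (F : 'I_3 -> R) :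
  \sum_(i < 3) F i = F (inord 0) + F (inord 1) + F (inord 2).
Proof.
rewrite !big_ord_recr big_ord0 /= add0r; congr (_ + _ + _); congr F;
  by apply/val_inj; rewrite /= inordK.
Qed.

Section CrossProduct.
Variable R : comNzRingType.

Definition dot (u v : 'rV[R]_3) : R := (u *m v^T) 0 0.

Definition cross (u v : 'rV[R]_3) : 'rV[R]_3 :=
  \row_k (u 0 (isucc k) * v 0 (isucc2 k) - u 0 (isucc2 k) * v 0 (isucc k)).

Lemma crossvv (u : 'rV[R]_3) : cross u u = 0.
Proof. by apply/rowP => k; rewrite !mxE mulrC subrr. Qed.

Lemma cross0v (w : 'rV[R]_3) : cross 0 w = 0.
Proof. by apply/rowP => k; rewrite !mxE !mul0r subrr. Qed.

Lemma cross_crossl (u v w : 'rV[R]_3) :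
  cross (cross u v) w = dot u w *: v - dot v w *: u.
Proof.
have [e1 e2 e3] := isucc_inord; have [f1 f2 f3] := isucc2_inord.
apply/rowP => k; rewrite !mxE /dot !mxE !sum3 !mxE.
case: (ord3P k) => ->; rewrite ?(e1, e2, e3, f1, f2, f3) ?mxE
  ?(e1, e2, e3, f1, f2, f3); ring.
Qed.

End CrossProduct.

Section FibreMap.
Variable C : numClosedFieldType.
Implicit Types (x u v : 'rV[C]_3) (V T : 'M[C]_3).

Definition omega_mx x : 'M[C]_3 := \matrix_(c, k) omega k x 0 c.

Lemma mul_omega_mx v x : v *m omega_mx x = cross x v.
Proof.
apply/rowP => k; rewrite !mxE (bigD1 (isucc k)) //.
rewrite (bigD1 (isucc2 k)) ?isucc_neq_isucc2 //=.
rewrite big1 => [|c /andP[/negbTE c1 /negbTE c2]]; last by rewrite !mxE c1 c2 mulr0.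
rewrite !mxE eqxx (negbTE (isucc_neq_isucc2 k)) eqxx addr0.
by rewrite mulrN addrC mulrC [_ * x _ _]mulrC.
Qed.

Lemma det_omega_mx x : x != 0 -> \det (omega_mx x) = 0.
Proof. by move=> x0; apply/eqP/det0P; exists x; rewrite // mul_omega_mx crossvv. Qed.

Lemma fmapE x V : fmap x V = V *m omega_mx x.
Proof.
apply/matrixP => i k; rewrite /fmap /omega_mx !mxE.
by apply: eq_bigr => c _; rewrite !mxE.
Qed.

Lemma pairing_monad_fibre (A : 'I_3 -> 'M[C]_3) x V u :
  pairing V (monad_fibre A x u) =
  \sum_(i < 3) \sum_(k < 3) fmap x V i k * (\sum_(j < 3) A k i j * u 0 j).
Proof.
apply: eq_bigr => i _.
transitivity (\sum_(c < 3) \sum_(k < 3) \sum_(j < 3)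
                V i c * (A k i j * u 0 j * omega k x 0 c)).
  apply: eq_bigr => c _; rewrite mxE mulr_sumr exchange_big.
  by apply: eq_bigr => k _; rewrite mulr_sumr.
rewrite exchange_big; apply: eq_bigr => k _; rewrite mxE mulr_suml.
apply: eq_bigr => c _; rewrite mulr_sumr; apply: eq_bigr => j _; ring.
Qed.

Lemma pairing_eq0 x V T :
  x != 0 -> in_fibre x T -> fmap x V = 0 -> pairing V T = 0.
Proof.
move=> x0 hT hV; apply: big1 => i _.
have cross_xV : cross x (row i V) = 0 by rewrite -mul_omega_mx -row_mul -fmapE hV row0.
have dot_xT : dot x (row i T) = 0.
  by rewrite /dot -[x *m _]trmxK trmx_mul trmxK -row_mul hT row0 !mxE.
have : dot (row i V) (row i T) *: x = 0.
  move: (cross_crossl x (row i V) (row i T)).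
  by rewrite cross_xV cross0v dot_xT scale0r sub0r => /esym/eqP; rewrite oppr_eq0 => /eqP.
move/eqP; rewrite scaler_eq0 (negbTE x0) orbF => /eqP dot_VT.
by rewrite -[RHS]dot_VT /dot !mxE; apply: eq_bigr => c _; rewrite !mxE.
Qed.

End FibreMap.

Theorem proposition10 (C : numClosedFieldType) (A : 'I_3 -> 'M[C]_3)
  (hA : monad_injective A) (x : 'rV[C]_3) (V : 'M[C]_3)
  (hp : PE_point A x V) :
  fmap x V != 0 /\ in_linear_subspace A (fmap x V) /\ \det (fmap x V) = 0.
Proof.
case: hp => x0 [T [hT VT0]] hV; split; [|split].
- by apply: contra_neq VT0; apply: pairing_eq0.
- by move=> u; rewrite -pairing_monad_fibre hV.
- by rewrite fmapE det_mulmx det_omega_mx // mulr0.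
Qed.
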